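(* For $n=0,1,2,\ldots$ let $\bar H^{(2)}_n=\sum_{0<j\leqslant n}\frac{1}{(2j-1)^2}$. Then $$\sum_{k=1}^\infty\frac{\binom{2k}k\bar H^{(2)}_k}{(2k+1)16^k}=\frac{\pi^3}{648},\qquad \sum_{k=1}^\infty\frac{\binom{2k}k\bar H^{(2)}_k}{(2k+1)8^k}=\frac{\pi^3}{192\sqrt2},\qquad \sum_{k=1}^\infty\frac{\binom{2k}k\bar H^{(2)}_k}{2k+1}\left(\frac3{16}\right)^k=\frac{\pi^3}{81\sqrt3},$$ and $$\sum_{k=0}^\infty\frac{\binom{2k}k\bar H^{(2)}_k}{(2k+1)(-32)^k}=-\frac{\sqrt2}{24}\log^3 2,\qquad \sum_{k=1}^\infty\frac{\binom{2k}k\bar H^{(2)}_k}{(2k+1)(-12)^k}=-\frac{\sqrt3}{48}\log^3 3,$$ $$\sum_{k=1}^\infty\frac{\binom{2k}k\bar H^{(2)}_k}{(2k+1)(-16)^k}=-\frac13\log^3\frac{\sqrt5+1}2.$$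
   Context: $\log$ denotes the natural logarithm. Note $\bar H^{(2)}_0=0$. *)

From Stdlib Require Import Reals.
From Coquelicot Require Import Coquelicot.
Open Scope R_scope.

Fixpoint Hbar2 (n : nat) : R :=
  match n with
  | O => 0
  | S m => Hbar2 m + 1 / (2 * INR (S m) - 1) ^ 2
  end.

Definition cbin (k : nat) : R := Binomial.C (2 * k) k.

Definition term (x : R) (k : nat) : R :=
  cbin k * Hbar2 k / (2 * INR k + 1) * x ^ k.

From Stdlib Require Import Reals Lra Lia Psatz Factorial.
From Coquelicot Require Import Coquelicot.
Open Scope R_scope.

(* Let s = 1 or s = -1, b_k = C(2k,k) / (4^k (2k+1)), and put
     A(y) = sum_k s^k b_k y^(2k+1)   (arcsin for s = 1, arsinh for s = -1),
     F(y) = sum_k 6 s^(k+1) b_k Hbar2_k y^(2k+1).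
   From b_(k+1) (2k+2) (2k+3) = (2k+1)^2 b_k and Hbar2_(k+1) = Hbar2_k + 1/(2k+1)^2,
   comparing coefficients gives (1 - s y^2) A'' - s y A' = 0 and
   (1 - s y^2) F'' - s y F' = 6 A.  Along a path with y'' = -s y and y'^2 = 1 - s y^2
   (y = sin for s = 1, y = sinh for s = -1) these read d/dt (A'(y) y') = 0 and
   d/dt (F'(y) y') = 6 A(y), so A(y(t)) = t and F(y(t)) = t^3.  Finally
   s F(y) / (6 y) = sum_k term (s y^2 / 4) k, and the six sums are the values at
   sin (pi/6), sin (pi/4), sin (pi/3), sinh (log sqrt 2), sinh (log sqrt 3) and
   sinh (log ((sqrt 5 + 1) / 2)). *)

Lemma cbin_mul_fact_sqr k : cbin k * INR (fact k) ^ 2 = INR (fact (2 * k)).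
Proof.
  unfold cbin, Binomial.C. replace (2 * k - k)%nat with k by lia.
  pose proof (INR_fact_lt_0 k). field. lra.
Qed.

Lemma cbin_S k :
  cbin (S k) * (INR k + 1) ^ 2 = cbin k * (2 * INR k + 1) * (2 * INR k + 2).
Proof.
  pose proof (cbin_mul_fact_sqr k) as Hk. pose proof (cbin_mul_fact_sqr (S k)) as HSk.
  replace (2 * S k)%nat with (S (S (2 * k))) in HSk by lia.
  rewrite !fact_simpl, !mult_INR, <- Hk, !S_INR, mult_INR in HSk. simpl (INR 2) in HSk.
  pose proof (INR_fact_lt_0 k).
  apply Rmult_eq_reg_r with (INR (fact k) ^ 2). 2: apply pow_nonzero; lra.
  nra.
Qed.

Definition asin_coef (k : nat) : R := cbin k / (4 ^ k * (2 * INR k + 1)).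

Lemma asin_coef_0 : asin_coef 0 = 1.
Proof. unfold asin_coef, cbin, Binomial.C. simpl. field. Qed.

Lemma asin_coef_S k :
  asin_coef (S k) = (2 * INR k + 1) ^ 2 * asin_coef k / ((2 * INR k + 3) * (2 * INR k + 2)).
Proof.
  pose proof (pos_INR k).
  assert (Hc : cbin (S k) = cbin k * (2 * INR k + 1) * (2 * INR k + 2) / (INR k + 1) ^ 2).
  { rewrite <- cbin_S. field. lra. }
  assert (4 ^ k <> 0) by (apply pow_nonzero; lra).
  unfold asin_coef. rewrite Hc, S_INR. simpl pow. field. lra.
Qed.

Lemma asin_coef_bounds k : 0 < asin_coef k <= 1.
Proof.
  induction k as [|k IH]; [rewrite asin_coef_0; lra|].
  rewrite asin_coef_S. pose proof (pos_INR k).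
  assert (0 < (2 * INR k + 3) * (2 * INR k + 2)) by nra.
  split.
  - apply Rdiv_lt_0_compat; [apply Rmult_lt_0_compat; [apply pow_lt|]|]; lra.
  - apply Rle_div_l; nra.
Qed.

Lemma Hbar2_bounds k : 0 <= Hbar2 k <= 3 - 2 / (INR k + 1).
Proof.
  induction k as [|k IH]; [simpl; lra|].
  change (Hbar2 (S k)) with (Hbar2 k + 1 / (2 * INR (S k) - 1) ^ 2).
  rewrite S_INR. pose proof (pos_INR k).
  assert (0 < 1 / (2 * (INR k + 1) - 1) ^ 2).
  { apply Rdiv_lt_0_compat; [lra|apply pow_lt; lra]. }
  (* the increment 1/(2k+1)^2 is at most the telescoping 2/(k+1) - 2/(k+2) *)
  assert (1 / (2 * (INR k + 1) - 1) ^ 2 <= 2 / (INR k + 1) - 2 / (INR k + 1 + 1)).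
  { replace (2 / (INR k + 1) - 2 / (INR k + 1 + 1)) with (1 / ((INR k + 1) * (INR k + 2) / 2))
      by (field; lra).
    apply Rmult_le_compat_l; [lra|]. apply Rinv_le_contravar; [apply Rdiv_lt_0_compat|]; nra. }
  lra.
Qed.

Definition odd_coefs (g : nat -> R) (n : nat) : R :=
  if Nat.even n then 0 else g (Nat.div2 n).

Lemma odd_coefs_even g k : odd_coefs g (2 * k) = 0.
Proof. unfold odd_coefs. now rewrite Nat.even_mul. Qed.

Lemma odd_coefs_odd g k : odd_coefs g (2 * k + 1) = g k.
Proof.
  unfold odd_coefs. rewrite Nat.even_add, Nat.even_mul, Nat.div2_odd'. reflexivity.
Qed.

Lemma odd_coefs_bound g M :
  0 <= M -> (forall k, Rabs (g k) <= M) -> forall n, Rabs (odd_coefs g n) <= M.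
Proof. intros HM Hg n. unfold odd_coefs. destruct (Nat.even n); [rewrite Rabs_R0|]; auto. Qed.

Lemma nat_parity_ind (P : nat -> Prop) :
  (forall k, P (2 * k)%nat) -> (forall k, P (2 * k + 1)%nat) -> forall n, P n.
Proof. intros He Ho n. destruct (Nat.Even_or_Odd n) as [[k ->]|[k ->]]; auto. Qed.

Lemma CV_radius_ge_1_of_bounded (c : nat -> R) M :
  (forall n, Rabs (c n) <= M) -> Rbar_le 1 (CV_radius c).
Proof.
  intros HM. apply (proj1 (CV_radius_bounded c)).
  exists M. intros n. rewrite pow1, Rmult_1_r. apply HM.
Qed.

Lemma Rbar_lt_Rabs_of_le_1 (r : Rbar) u : Rbar_le 1 r -> Rabs u < 1 -> Rbar_lt (Rabs u) r.
Proof. destruct r; simpl; lra. Qed.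

(* The coefficients of y^n in (1 - s y^2) c'' - s y c' = d. *)
Definition ode_coef_rel (s : R) (c d : nat -> R) : Prop :=
  forall n, PS_derive (PS_derive c) n - s * INR n ^ 2 * c n = d n.

Lemma PSeries_ode_of_coef_rel (c d : nat -> R) (s : R) :
  Rbar_le 1 (CV_radius c) -> ode_coef_rel s c d ->
  forall y, Rabs y < 1 ->
  PSeries (PS_derive (PS_derive c)) y * (1 - s * y ^ 2) - s * y * PSeries (PS_derive c) y
  = PSeries d y.
Proof.
  intros Hc Hrec y Hy.
  set (D1 := PS_derive c). set (D2 := PS_derive D1).
  assert (E1 : ex_pseries D1 y).
  { apply CV_radius_inside. unfold D1. rewrite CV_radius_derive.
    now apply Rbar_lt_Rabs_of_le_1. }
  assert (E2 : ex_pseries D2 y).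
  { apply CV_radius_inside. unfold D2, D1. rewrite !CV_radius_derive.
    now apply Rbar_lt_Rabs_of_le_1. }
  set (e := PS_plus D2 (PS_scal (- s) (PS_plus (PS_incr_1 (PS_incr_1 D2)) (PS_incr_1 D1)))).
  assert (Ee : PSeries e y = PSeries D2 y + - s * (y * (y * PSeries D2 y) + y * PSeries D1 y)).
  { assert (E3 : ex_pseries (PS_incr_1 (PS_incr_1 D2)) y)
      by apply (ex_pseries_incr_1 (V := R_NormedModule)), ex_pseries_incr_1, E2.
    assert (E4 : ex_pseries (PS_incr_1 D1) y)
      by apply (ex_pseries_incr_1 (V := R_NormedModule)), E1.
    unfold e. rewrite PSeries_plus, PSeries_scal, PSeries_plus, !PSeries_incr_1; auto.
    apply ex_pseries_scal; [apply Rmult_comm|]. now apply (ex_pseries_plus (V := R_NormedModule)). }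
  assert (Ed : PSeries e y = PSeries d y).
  { apply PSeries_ext. intros n. rewrite <- Hrec.
    unfold e, D2, D1, PS_plus, PS_scal, PS_incr_1, PS_derive, plus, scal, zero, mult; simpl.
    destruct n as [|[|m]]; cbn -[INR]; rewrite ?S_INR; change (INR 0) with 0; try ring.
    change (match m with 0%nat => 1 | S _ => INR m + 1 end) with (INR (S m)). rewrite S_INR. ring. }
  rewrite <- Ed, Ee. ring.
Qed.

Lemma eq_increments_of_is_derive (f g df : R -> R) (t0 : R) :
  (forall t, 0 <= t <= t0 -> is_derive f t (df t)) ->
  (forall t, 0 <= t <= t0 -> is_derive g t (df t)) ->
  forall t, 0 <= t <= t0 -> f t - f 0 = g t - g 0.
Proof.
  intros Hf Hg t Ht.
  assert (Hd : forall u, 0 <= u <= t0 -> is_derive (fun u => f u - g u) u 0).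
  { intros u Hu. replace 0 with (df u - df u) by ring.
    exact (is_derive_minus f g u _ _ (Hf u Hu) (Hg u Hu)). }
  destruct (MVT_gen (fun u => f u - g u) 0 t (fun _ => 0)) as [c [_ Hc]].
  - intros x Hx. apply Hd. unfold Rmin, Rmax in Hx. destruct (Rle_dec 0 t); lra.
  - intros x Hx. apply continuity_pt_filterlim, (ex_derive_continuous (fun u => f u - g u)).
    exists 0. apply Hd. unfold Rmin, Rmax in Hx. destruct (Rle_dec 0 t); lra.
  - lra.
Qed.

Definition asin_series_coefs (s : R) : nat -> R :=
  odd_coefs (fun k => s ^ k * asin_coef k).

Definition asin_cube_coefs (s : R) : nat -> R :=
  odd_coefs (fun k => 6 * s ^ S k * asin_coef k * Hbar2 k).

Lemma Rabs_pow_of_sqr_1 s k : s * s = 1 -> Rabs (s ^ k) = 1.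
Proof.
  intros Hs. rewrite <- RPow_abs.
  assert (Hs2 : Rabs s * Rabs s = 1) by (rewrite <- Rabs_mult, Hs; apply Rabs_R1).
  replace (Rabs s) with 1 by (pose proof (Rabs_pos s); nra). apply pow1.
Qed.

Lemma asin_series_coefs_bound s : s * s = 1 -> forall n, Rabs (asin_series_coefs s n) <= 1.
Proof.
  intros Hs. apply odd_coefs_bound; [lra|]. intros k.
  pose proof (asin_coef_bounds k).
  rewrite Rabs_mult, Rabs_pow_of_sqr_1, Rabs_pos_eq; lra.
Qed.

Lemma asin_cube_coefs_bound s : s * s = 1 -> forall n, Rabs (asin_cube_coefs s n) <= 18.
Proof.
  intros Hs. apply odd_coefs_bound; [lra|]. intros k.
  pose proof (asin_coef_bounds k). pose proof (Hbar2_bounds k). pose proof (pos_INR k).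
  assert (0 < 2 / (INR k + 1)) by (apply Rdiv_lt_0_compat; lra).
  rewrite !Rabs_mult, Rabs_pow_of_sqr_1, !Rabs_pos_eq by lra. nra.
Qed.

Lemma asin_series_coefs_ode s : ode_coef_rel s (asin_series_coefs s) (fun _ => 0).
Proof.
  unfold ode_coef_rel, PS_derive. apply nat_parity_ind; intros k; unfold asin_series_coefs.
  - replace (S (S (2 * k))) with (2 * S k)%nat by lia. rewrite !odd_coefs_even. ring.
  - replace (S (S (2 * k + 1))) with (2 * S k + 1)%nat by lia.
    replace (S (2 * k + 1)) with (2 * k + 1 + 1)%nat by lia.
    rewrite !odd_coefs_odd, asin_coef_S, !plus_INR, !mult_INR, !S_INR.
    pose proof (pos_INR k). simpl pow. rewrite INR_0. field. lra.
Qed.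

Lemma asin_cube_coefs_ode s : s * s = 1 ->
  ode_coef_rel s (asin_cube_coefs s) (fun n => 6 * asin_series_coefs s n).
Proof.
  intros Hs. unfold ode_coef_rel, PS_derive.
  apply nat_parity_ind; intros k; unfold asin_series_coefs, asin_cube_coefs.
  - replace (S (S (2 * k))) with (2 * S k)%nat by lia. rewrite !odd_coefs_even. ring.
  - replace (S (S (2 * k + 1))) with (2 * S k + 1)%nat by lia.
    replace (S (2 * k + 1)) with (2 * k + 1 + 1)%nat by lia.
    rewrite !odd_coefs_odd, asin_coef_S, !plus_INR, !mult_INR, !S_INR.
    change (Hbar2 (S k)) with (Hbar2 k + 1 / (2 * INR (S k) - 1) ^ 2). rewrite S_INR.
    pose proof (pos_INR k). apply Rminus_diag_uniq.
    transitivity (6 * s ^ k * asin_coef k * (s * s - 1)); [simpl; field; lra|].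
    rewrite Hs. ring.
Qed.

Section PowerSeriesAlongPath.

Variables (s t0 : R) (y dy : R -> R).
Hypothesis s_sqr : s * s = 1.
Hypothesis y_0 : y 0 = 0.
Hypothesis dy_0 : dy 0 = 1.
Hypothesis y_derive : forall t, 0 <= t <= t0 -> is_derive y t (dy t).
Hypothesis dy_derive : forall t, 0 <= t <= t0 -> is_derive dy t (- s * y t).
Hypothesis dy_sqr : forall t, 0 <= t <= t0 -> dy t ^ 2 = 1 - s * y t ^ 2.
Hypothesis y_bound : forall t, 0 <= t <= t0 -> Rabs (y t) < 1.

Lemma PSeries_path_derive (c : nat -> R) : Rbar_le 1 (CV_radius c) ->
  forall t, 0 <= t <= t0 ->
  is_derive (fun t => PSeries c (y t)) t (PSeries (PS_derive c) (y t) * dy t).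
Proof.
  intros Hc t Ht. rewrite Rmult_comm.
  apply (is_derive_comp (PSeries c) y t); [|now apply y_derive].
  apply is_derive_PSeries. now apply Rbar_lt_Rabs_of_le_1, y_bound.
Qed.

Lemma PSeries_path_derive2 (c d : nat -> R) : Rbar_le 1 (CV_radius c) -> ode_coef_rel s c d ->
  forall t, 0 <= t <= t0 ->
  is_derive (fun t => PSeries (PS_derive c) (y t) * dy t) t (PSeries d (y t)).
Proof.
  intros Hc Hrec t Ht.
  rewrite <- (PSeries_ode_of_coef_rel c d s Hc Hrec (y t) (y_bound t Ht)).
  set (D1 := PSeries (PS_derive c) (y t)). set (D2 := PSeries (PS_derive (PS_derive c)) (y t)).
  replace (D2 * (1 - s * y t ^ 2) - s * y t * D1) with (D2 * dy t * dy t + D1 * (- s * y t))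
    by (rewrite <- dy_sqr by auto; ring).
  apply (is_derive_mult (fun t => PSeries (PS_derive c) (y t)) dy t);
    [| now apply dy_derive | apply Rmult_comm].
  apply PSeries_path_derive; auto. now rewrite CV_radius_derive.
Qed.

Lemma asin_series_path : forall t, 0 <= t <= t0 -> PSeries (asin_series_coefs s) (y t) = t.
Proof.
  set (a := asin_series_coefs s).
  assert (Ra : Rbar_le 1 (CV_radius a)).
  { apply CV_radius_ge_1_of_bounded with 1. now apply asin_series_coefs_bound. }
  assert (Da' : forall t, 0 <= t <= t0 ->
    is_derive (fun t => PSeries (PS_derive a) (y t) * dy t) t 0).
  { intros t Ht. rewrite <- (PSeries_const_0 (y t)).
    apply (PSeries_path_derive2 a); auto. apply asin_series_coefs_ode. }
  assert (Ea' : forall t, 0 <= t <= t0 -> PSeries (PS_derive a) (y t) * dy t = 1).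
  { intros t Ht.
    assert (E := eq_increments_of_is_derive _ (fun _ => 1) (fun _ => 0) t0 Da'
                   (fun t _ => is_derive_const 1 t) t Ht).
    cbv beta in E. rewrite y_0, dy_0, PSeries_0 in E.
    assert (PS_derive a 0%nat = 1) by (unfold PS_derive, a, asin_series_coefs, odd_coefs;
                                       simpl; rewrite asin_coef_0; ring).
    lra. }
  intros t Ht.
  assert (E : PSeries a (y t) - PSeries a (y 0) = t - 0).
  { apply (eq_increments_of_is_derive (fun u => PSeries a (y u)) (fun u => u) (fun _ => 1) t0);
      auto.
    - intros u Hu. rewrite <- (Ea' u Hu). now apply PSeries_path_derive.
    - intros u _. exact (is_derive_id u). }
  rewrite y_0, PSeries_0 in E.
  assert (a 0%nat = 0) by reflexivity.
  lra.
Qed.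

Lemma asin_cube_series_path : forall t, 0 <= t <= t0 -> PSeries (asin_cube_coefs s) (y t) = t ^ 3.
Proof.
  set (f := asin_cube_coefs s).
  assert (Rf : Rbar_le 1 (CV_radius f)).
  { apply CV_radius_ge_1_of_bounded with 18. now apply asin_cube_coefs_bound. }
  assert (Df' : forall t, 0 <= t <= t0 ->
    is_derive (fun t => PSeries (PS_derive f) (y t) * dy t) t (6 * t)).
  { intros t Ht.
    replace (6 * t) with (PSeries (PS_scal 6 (asin_series_coefs s)) (y t))
      by now rewrite PSeries_scal, asin_series_path.
    apply (PSeries_path_derive2 f); auto. now apply asin_cube_coefs_ode. }
  assert (Ef' : forall t, 0 <= t <= t0 -> PSeries (PS_derive f) (y t) * dy t = 3 * t ^ 2).
  { intros t Ht.
    assert (E : PSeries (PS_derive f) (y t) * dy t - PSeries (PS_derive f) (y 0) * dy 0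
                = 3 * t ^ 2 - 3 * 0 ^ 2).
    { apply (eq_increments_of_is_derive (fun u => PSeries (PS_derive f) (y u) * dy u)
               (fun u => 3 * u ^ 2) (fun u => 6 * u) t0); auto.
      intros u _. auto_derive; [exact I | ring]. }
    rewrite y_0, dy_0, PSeries_0 in E.
    assert (PS_derive f 0%nat = 0)
      by (unfold PS_derive, f, asin_cube_coefs, odd_coefs; simpl; ring).
    lra. }
  intros t Ht.
  assert (E : PSeries f (y t) - PSeries f (y 0) = t ^ 3 - 0 ^ 3).
  { apply (eq_increments_of_is_derive (fun u => PSeries f (y u)) (fun u => u ^ 3)
             (fun u => 3 * u ^ 2) t0); auto.
    - intros u Hu. rewrite <- (Ef' u Hu). now apply PSeries_path_derive.
    - intros u _. auto_derive; [exact I | ring]. }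
  rewrite y_0, PSeries_0 in E.
  assert (f 0%nat = 0) by reflexivity.
  lra.
Qed.

End PowerSeriesAlongPath.

Lemma is_series_odd_coefs (g : nat -> R) M y :
  (forall k, Rabs (g k) <= M) -> Rabs y < 1 -> y <> 0 ->
  is_series (fun k => g k * (y ^ 2) ^ k) (PSeries (odd_coefs g) y / y).
Proof.
  intros Hg Hy Hy0.
  assert (Hy2 : Rabs (y ^ 2) < 1).
  { rewrite <- RPow_abs. pose proof (Rabs_pos y). simpl. nra. }
  assert (Hodd : ex_pseries (fun k => odd_coefs g (2 * k + 1)) (y ^ 2)).
  { apply CV_radius_inside, Rbar_lt_Rabs_of_le_1, Hy2.
    apply CV_radius_ge_1_of_bounded with M. intros k. now rewrite odd_coefs_odd. }
  assert (Heven : ex_pseries (fun k => odd_coefs g (2 * k)) (y ^ 2)).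
  { apply ex_pseries_ext with (fun _ => 0); [intros k; now rewrite odd_coefs_even|].
    apply CV_radius_inside. rewrite CV_radius_const_0. exact I. }
  rewrite PSeries_odd_even by auto.
  rewrite (PSeries_ext (fun k => odd_coefs g (2 * k)) (fun _ => 0)),
          (PSeries_ext (fun k => odd_coefs g (2 * k + 1)) g), PSeries_const_0
    by (intros k; now rewrite ?odd_coefs_even, ?odd_coefs_odd).
  replace ((0 + y * PSeries g (y ^ 2)) / y) with (PSeries g (y ^ 2)) by (field; auto).
  apply is_series_ext with (fun k => scal (pow_n (y ^ 2) k) (g k)).
  { intros k. rewrite pow_n_pow. apply Rmult_comm. }
  apply PSeries_correct. eapply ex_pseries_ext; [|exact Hodd]. intros k. apply odd_coefs_odd.
Qed.

Lemma is_series_term_asin_cube s y x l : s * s = 1 -> Rabs y < 1 -> y <> 0 ->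
  x = s * y ^ 2 / 4 -> l = s * PSeries (asin_cube_coefs s) y / (6 * y) ->
  is_series (term x) l.
Proof.
  intros Hs Hy Hy0 -> ->.
  set (g := fun k => 6 * s ^ S k * asin_coef k * Hbar2 k).
  assert (Hg : forall k, Rabs (g k) <= 18).
  { intros k. rewrite <- (odd_coefs_odd g k). now apply asin_cube_coefs_bound. }
  assert (H := is_series_odd_coefs g 18 y Hg Hy Hy0).
  apply (is_series_scal_l (s / 6)) in H.
  replace (s * PSeries (asin_cube_coefs s) y / (6 * y))
    with (s / 6 * (PSeries (asin_cube_coefs s) y / y)) by (field; auto).
  eapply is_series_ext; [|exact H]. intros k.
  unfold term, g, asin_coef, scal; simpl; unfold mult; simpl.
  assert (4 ^ k <> 0) by (apply pow_nonzero; lra). pose proof (pos_INR k).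
  unfold Rdiv. rewrite !Rpow_mult_distr, pow_inv, pow1.
  apply Rminus_diag_uniq.
  transitivity (cbin k * Hbar2 k * s ^ k * y ^ k * y ^ k / (4 ^ k * (2 * INR k + 1)) * (s * s - 1)).
  - field. lra.
  - rewrite Hs. ring.
Qed.

Lemma is_series_term_S (x l : R) : is_series (term x) l -> is_series (fun k => term x (S k)) l.
Proof.
  intros H. apply is_series_incr_1.
  match goal with |- is_series _ ?v => replace v with l; [exact H|] end.
  unfold term, plus; simpl. lra.
Qed.

Lemma is_series_term_sin t x l : 0 < t < PI / 2 ->
  x = sin t ^ 2 / 4 -> l = t ^ 3 / (6 * sin t) -> is_series (term x) l.
Proof.
  intros Ht -> ->.
  assert (Hsin : forall u, 0 <= u <= t -> 0 <= sin u < 1).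
  { intros u Hu. split; [apply sin_ge_0; lra|].
    rewrite <- sin_PI2. apply sin_increasing_1; lra. }
  assert (Ht0 : 0 < sin t) by (apply sin_gt_0; lra).
  assert (Hcube : PSeries (asin_cube_coefs 1) (sin t) = t ^ 3).
  { apply (asin_cube_series_path 1 t sin cos); try lra; auto using sin_0, cos_0.
    - intros u _. apply is_derive_sin.
    - intros u _. replace (- (1) * sin u) with (- sin u) by ring. apply is_derive_cos.
    - intros u _. pose proof (sin2_cos2 u). unfold Rsqr in *. simpl. lra.
    - intros u Hu. specialize (Hsin u Hu). rewrite Rabs_pos_eq; lra. }
  apply (is_series_term_asin_cube 1 (sin t)); try lra.
  - specialize (Hsin t). rewrite Rabs_pos_eq; lra.
  - rewrite Hcube. field. lra.
Qed.

Lemma is_series_term_sinh t x l : 0 < t -> sinh t < 1 ->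
  x = - sinh t ^ 2 / 4 -> l = - t ^ 3 / (6 * sinh t) -> is_series (term x) l.
Proof.
  intros Ht Ht1 -> ->.
  assert (Hsinh : forall u, 0 <= u <= t -> 0 <= sinh u <= sinh t).
  { intros u Hu. rewrite <- sinh_0.
    split; destruct (Req_dec u 0), (Req_dec u t); subst; try lra; left; apply sinh_lt; lra. }
  assert (Ht0 : 0 < sinh t) by (rewrite <- sinh_0; apply sinh_lt; lra).
  assert (Hcube : PSeries (asin_cube_coefs (-1)) (sinh t) = t ^ 3).
  { apply (asin_cube_series_path (-1) t sinh cosh); try lra; auto using sinh_0, cosh_0.
    - intros u _. apply is_derive_Reals, derivable_pt_lim_sinh.
    - intros u _. replace (- -1 * sinh u) with (sinh u) by ring.
      apply is_derive_Reals, derivable_pt_lim_cosh.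
    - intros u _. unfold sinh, cosh. rewrite exp_Ropp. pose proof (exp_pos u). field. lra.
    - intros u Hu. specialize (Hsinh u Hu). rewrite Rabs_pos_eq; lra. }
  apply (is_series_term_asin_cube (-1) (sinh t)); try lra.
  - rewrite Rabs_pos_eq; lra.
  - rewrite Hcube. field. lra.
Qed.

Lemma sinh_ln a : 0 < a -> sinh (ln a) = (a - / a) / 2.
Proof. intros Ha. unfold sinh. now rewrite exp_Ropp, exp_ln. Qed.

Lemma ln_sqrt a : 0 < a -> ln (sqrt a) = ln a / 2.
Proof.
  intros Ha. pose proof (sqrt_lt_R0 a Ha).
  rewrite <- (sqrt_sqrt a) at 2 by lra. rewrite ln_mult by auto. field.
Qed.

Lemma is_series_term_inv16 : is_series (fun k => term (/ 16) (S k)) (PI ^ 3 / 648).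
Proof.
  pose proof PI_RGT_0. apply is_series_term_S, (is_series_term_sin (PI / 6)); rewrite ?sin_PI6.
  all: try lra; field.
Qed.

Lemma is_series_term_inv8 : is_series (fun k => term (/ 8) (S k)) (PI ^ 3 / (192 * sqrt 2)).
Proof.
  pose proof PI_RGT_0. pose proof (sqrt_lt_R0 2 ltac:(lra)). pose proof (sqrt_sqrt 2 ltac:(lra)).
  apply is_series_term_S, (is_series_term_sin (PI / 4)); rewrite ?sin_PI4; [lra| |].
  all: field_simplify_eq; try lra; replace (sqrt 2 ^ 2) with 2 by lra; ring.
Qed.

Lemma is_series_term_3_16 : is_series (fun k => term (3 / 16) (S k)) (PI ^ 3 / (81 * sqrt 3)).
Proof.
  pose proof PI_RGT_0. pose proof (sqrt_lt_R0 3 ltac:(lra)). pose proof (sqrt_sqrt 3 ltac:(lra)).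
  apply is_series_term_S, (is_series_term_sin (PI / 3)); rewrite ?sin_PI3; [lra| |].
  all: field_simplify_eq; try lra; replace (sqrt 3 ^ 2) with 3 by lra; ring.
Qed.

Lemma is_series_term_inv_m32 : is_series (fun k => term (/ (-32)) k) (- (sqrt 2 / 24) * (ln 2) ^ 3).
Proof.
  pose proof (sqrt_lt_R0 2 ltac:(lra)). pose proof (sqrt_sqrt 2 ltac:(lra)).
  assert (Hln : 0 < ln 2) by (rewrite <- ln_1; apply ln_increasing; lra).
  assert (Hsinh : sinh (ln (sqrt 2)) = sqrt 2 / 4).
  { rewrite sinh_ln by auto. field_simplify_eq; lra. }
  apply (is_series_term_sinh (ln (sqrt 2))); rewrite ?Hsinh, ?ln_sqrt by lra; try nra.
  all: field_simplify_eq; try lra; replace (sqrt 2 ^ 2) with 2 by lra; ring.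
Qed.

Lemma is_series_term_inv_m12 :
  is_series (fun k => term (/ (-12)) (S k)) (- (sqrt 3 / 48) * (ln 3) ^ 3).
Proof.
  pose proof (sqrt_lt_R0 3 ltac:(lra)). pose proof (sqrt_sqrt 3 ltac:(lra)).
  assert (Hln : 0 < ln 3) by (rewrite <- ln_1; apply ln_increasing; lra).
  assert (Hsinh : sinh (ln (sqrt 3)) = sqrt 3 / 3).
  { rewrite sinh_ln by auto. field_simplify_eq; lra. }
  apply is_series_term_S, (is_series_term_sinh (ln (sqrt 3))); rewrite ?Hsinh, ?ln_sqrt by lra;
    try nra.
  all: field_simplify_eq; try lra; replace (sqrt 3 ^ 2) with 3 by lra; ring.
Qed.

Lemma is_series_term_inv_m16 :
  is_series (fun k => term (/ (-16)) (S k)) (- (1 / 3) * (ln ((sqrt 5 + 1) / 2)) ^ 3).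
Proof.
  pose proof (sqrt_lt_R0 5 ltac:(lra)). pose proof (sqrt_sqrt 5 ltac:(lra)).
  assert (Hphi : 1 < (sqrt 5 + 1) / 2) by nra.
  assert (Hln : 0 < ln ((sqrt 5 + 1) / 2)) by (rewrite <- ln_1; apply ln_increasing; lra).
  assert (Hsinh : sinh (ln ((sqrt 5 + 1) / 2)) = 1 / 2).
  { rewrite sinh_ln by lra. field_simplify_eq; lra. }
  apply is_series_term_S, (is_series_term_sinh (ln ((sqrt 5 + 1) / 2))); rewrite ?Hsinh; try lra.
Qed.

Theorem corollary1p1 :
  is_series (fun k => term (/ 16) (S k)) (PI ^ 3 / 648) /\
  is_series (fun k => term (/ 8) (S k)) (PI ^ 3 / (192 * sqrt 2)) /\
  is_series (fun k => term (3 / 16) (S k)) (PI ^ 3 / (81 * sqrt 3)) /\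
  is_series (fun k => term (/ (-32)) k) (- (sqrt 2 / 24) * (ln 2) ^ 3) /\
  is_series (fun k => term (/ (-12)) (S k)) (- (sqrt 3 / 48) * (ln 3) ^ 3) /\
  is_series (fun k => term (/ (-16)) (S k))
    (- (1 / 3) * (ln ((sqrt 5 + 1) / 2)) ^ 3).
Proof.
  repeat split.
  - exact is_series_term_inv16.
  - exact is_series_term_inv8.
  - exact is_series_term_3_16.
  - exact is_series_term_inv_m32.
  - exact is_series_term_inv_m12.
  - exact is_series_term_inv_m16.
Qed.
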